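(* Let $(X,d_X,\mu_X)$ be a compact metric measure space and let $\phi_i$ be an $L^2$-normalized eigenfunction of the distance kernel operator $D^X$ with eigenvalue $\lambda_i$. Then the function $\lambda_i\phi_i$ ($=D^X\phi_i$) is $\sqrt{\operatorname{Vol}(X)}$-Lipschitz. Hence, if $\lambda_i\neq0$, $\phi_i$ is $\big(\sqrt{\operatorname{Vol}(X)}/|\lambda_i|\big)$-Lipschitz.
   Context: A metric measure space carries a Radon Borel measure; $\operatorname{Vol}(X)=\mu_X(X)$. The distance kernel operator is $(D^Xf)(x)=\int_X f(y)d_X(x,y)\,d\mu_X(y)$ on $L^2(X,\mu_X)$. *)

From HB Require Import structures.
From mathcomp Require Import all_boot all_order all_algebra.
From mathcomp Require Import all_classical all_reals all_analysis.
Set Implicit Arguments. Unset Strict Implicit. Unset Printing Implicit Defensive.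
Import Order.TTheory GRing.Theory Num.Theory.
Local Open Scope classical_set_scope.
Local Open Scope ring_scope.

Section MetricMeasure.
Context {R : realType} {d : measure_display} {T : measurableType d}.

Definition is_metric (dX : T -> T -> R) : Prop :=
  [/\ forall x y, 0 <= dX x y,
      forall x y, dX x y = 0 <-> x = y,
      forall x y, dX x y = dX y x &
      forall x y z, dX x z <= dX x y + dX y z].

Definition dball (dX : T -> T -> R) (x : T) (r : R) : set T :=
  [set y | dX x y < r].

Definition dopen (dX : T -> T -> R) (A : set T) : Prop :=
  forall x, A x -> exists2 r : R, 0 < r & dball dX x r `<=` A.

Definition dcompact (dX : T -> T -> R) (K : set T) : Prop :=
  forall (I : Type) (U : I -> set T),
    (forall i, dopen dX (U i)) -> K `<=` \bigcup_i U i ->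
    exists2 F : set I, finite_set F & K `<=` \bigcup_(i in F) U i.

Definition borel_for (dX : T -> T -> R) : Prop :=
  (@measurable d T) = <<s dopen dX >>.

Definition radon (dX : T -> T -> R) (mu : {measure set T -> \bar R}) : Prop :=
  (forall x, exists2 r : R, 0 < r & (mu (dball dX x r) < +oo)%E) /\
  (forall A, measurable A ->
     mu A = ereal_sup [set mu K | K in [set K | dcompact dX K /\ K `<=` A]]).

Definition compact_mm_space (dX : T -> T -> R) (mu : {measure set T -> \bar R})
  : Prop :=
  [/\ is_metric dX, borel_for dX, dcompact dX setT & radon dX mu].

Definition Vol (mu : {measure set T -> \bar R}) : \bar R := mu setT.

Definition distop (dX : T -> T -> R) (mu : {measure set T -> \bar R})
  (f : T -> R) (x : T) : R :=
  Rintegral mu setT (fun y => f y * dX x y).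

Definition L2_normalized (mu : {measure set T -> \bar R}) (f : T -> R) : Prop :=
  measurable_fun setT f /\ (\int[mu]_x ((f x) ^+ 2)%:E = 1)%E.

(* f is an eigenfunction of D^X with eigenvalue lam (equality in L^2, i.e. a.e.) *)
Definition is_eigenfunction (dX : T -> T -> R) (mu : {measure set T -> \bar R})
  (lam : R) (f : T -> R) : Prop :=
  {ae mu, forall x, distop dX mu f x = lam * f x}.

Definition lipschitz_with (dX : T -> T -> R) (L : R) (f : T -> R) : Prop :=
  forall x y, `|f x - f y| <= L * dX x y.

End MetricMeasure.

(* For the distance kernel operator D,
     D f x - D f y = \int f z (d(x,z) - d(y,z)) dmu(z)
   and |d(x,z) - d(y,z)| <= d(x,y), so D f is Lipschitz with constant ||f||_1;
   by Cauchy-Schwarz against the constant 1, ||f||_1 <= sqrt(Vol X) ||f||_2,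
   which is sqrt(Vol X) for normalized f.  Compactness makes the Radon measure
   finite and the metric bounded, so every integral involved is finite.  An
   eigenfunction is only determined a.e., so for lam != 0 the Lipschitz
   representative of phi is D phi / lam. *)

From mathcomp Require Import all_boot all_order all_algebra.
From mathcomp Require Import all_classical all_reals all_analysis.
From mathcomp Require Import measurable_realfun.
Set Implicit Arguments. Unset Strict Implicit. Unset Printing Implicit Defensive.
Import Order.TTheory GRing.Theory Num.Theory.
Local Open Scope classical_set_scope.
Local Open Scope ring_scope.

Section CauchySchwarz.
Context {R : realType} {d : measure_display} {T : measurableType d}.
Variable mu : {measure set T -> \bar R}.
Local Open Scope ereal_scope.

Lemma Lnorm2_sqrte (f : T -> R) :
  'N[mu]_2%:E[EFin \o f] = sqrte (\int[mu]_x (f x ^+ 2)%:E).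
Proof.
rewrite unlock /=.
under eq_integral do rewrite powR_mulrn // real_normK ?num_real //.
by rewrite poweR12_sqrt //; apply: integral_ge0 => x _; rewrite lee_fin sqr_ge0.
Qed.

Lemma integral_abs_le_sqrte (f : T -> R) : measurable_fun setT f ->
  \int[mu]_x `|f x|%:E <= sqrte (mu setT) * sqrte (\int[mu]_x (f x ^+ 2)%:E).
Proof.
move=> mf.
have := @hoelder _ _ _ mu f (cst 1%R) 2 2 mf (measurable_cst _).
rewrite Lnorm1 Lnorm2_sqrte Lnorm_cst1 poweR12_sqrt // muleC.
under eq_integral do rewrite /= mulr1.
by apply=> //; rewrite [RHS](splitr 1) div1r.
Qed.

End CauchySchwarz.

Section MetricMeasureSpace.
Context {R : realType} {d : measure_display} {T : measurableType d}.
Variable dX : T -> T -> R.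
Hypothesis dX_metric : is_metric dX.

Lemma lipschitz_with_le L L' (f : T -> R) :
  L <= L' -> lipschitz_with dX L f -> lipschitz_with dX L' f.
Proof.
have [dX_ge0 _ _ _] := dX_metric.
by move=> LL' fL x y; rewrite (le_trans (fL x y)) // ler_wpM2r.
Qed.

Lemma lipschitz_withMr L a (f : T -> R) :
  lipschitz_with dX L f -> lipschitz_with dX (L * `|a|) (fun x => f x * a).
Proof. by move=> fL x y; rewrite -mulrBl normrM mulrAC ler_wpM2r. Qed.

Lemma dist_lipschitz z : lipschitz_with dX 1 (dX^~ z).
Proof.
have [_ _ dXC dX_triangle] := dX_metric.
move=> x y; rewrite mul1r ler_distl lerBlDr.
by rewrite addrC [dX x y]dXC (dX_triangle y x z) addrC (dXC y x) dX_triangle.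
Qed.

Lemma dopen_dball x r : dopen dX (dball dX x r).
Proof.
have [_ _ _ dX_triangle] := dX_metric.
move=> y xy; exists (r - dX x y); first by rewrite subr_gt0.
by move=> z yz; rewrite /dball /= (le_lt_trans (dX_triangle x y z)) // -ltrBrDl.
Qed.

Lemma dcompact_dist_bounded x : dcompact dX setT ->
  exists B, forall z, dX x z <= B.
Proof.
have [dX_ge0 _ _ _] := dX_metric.
move=> cpt; have [F Ffin cov] : exists2 F : set nat, finite_set F &
    setT `<=` \bigcup_(n in F) dball dX x n%:R.
  apply: cpt => [n|z _]; first exact: dopen_dball.
  by exists (Num.bound (dX x z)) => //; apply: archi_boundP.
exists (\max_(n <- finmap.enum_fset (fset_set F)) n)%:R => z.
have [n Fn xz] := cov z I; rewrite ltW // (lt_le_trans xz) // ler_nat.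
by apply: leq_bigmax_seq => //; rewrite in_fset_set // inE.
Qed.

Hypothesis dX_borel : borel_for dX.

Lemma measurable_dball x r : measurable (dball dX x r).
Proof. by rewrite dX_borel; apply: sub_sigma_algebra; apply: dopen_dball. Qed.

Lemma measurable_dist x : measurable_fun setT (dX x).
Proof.
apply: (measurability _ (RGenInftyO.measurableE R)).
move=> _ [_ [r ->] <-]; rewrite setTI.
have -> : dX x @^-1` `]-oo, r[%classic = dball dX x r.
  by apply/seteqP; split => z; rewrite /= in_itv.
exact: measurable_dball.
Qed.

Variable mu : {measure set T -> \bar R}.

Lemma radon_compact_fin_num : dcompact dX setT -> radon dX mu ->
  mu setT \is a fin_num.
Proof.
have [_ dX_eq0 _ _] := dX_metric.
move=> cpt [locfin _].
have /choice [r rP] : forall x, exists r, 0 < r /\ (mu (dball dX x r) < +oo)%E.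
  by move=> x; have [r r0 finr] := locfin x; exists r.
have [F Ffin cov] : exists2 F : set T, finite_set F &
    setT `<=` \bigcup_(x in F) dball dX x (r x).
  apply: cpt => [x|x _]; first exact: dopen_dball.
  by exists x => //; rewrite /dball /= (proj2 (dX_eq0 x x)) //; case: (rP x).
rewrite ge0_fin_numE ?measure_ge0 //.
apply: le_lt_trans (content_sub_fsum mu Ffin _ _ cov) _ => //.
  by move=> x _; apply: measurable_dball.
by rewrite fsbig_finite //; apply: lte_sum_pinfty => x _; case: (rP x).
Qed.

Hypothesis dX_compact : dcompact dX setT.

Lemma integrable_mul_dist x (f : T -> R) : mu.-integrable setT (EFin \o f) ->
  mu.-integrable setT (EFin \o (fun z => f z * dX x z)).
Proof.
have [dX_ge0 _ _ _] := dX_metric.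
move=> fint; have [B dXB] := dcompact_dist_bounded x dX_compact.
rewrite (_ : EFin \o _ = ((EFin \o f) \* (EFin \o dX x))%E); last first.
  by apply: funext => z /=; rewrite EFinM.
apply: integrableMl => //; first exact: measurable_dist.
exists B; split=> [|M BM z _]; first exact: num_real.
by rewrite /= ger0_norm // ltW // (le_lt_trans (dXB z)).
Qed.

Lemma distop_lipschitz (f : T -> R) : mu.-integrable setT (EFin \o f) ->
  lipschitz_with dX (\int[mu]_z `|f z|) (distop dX mu f).
Proof.
have [dX_ge0 _ _ _] := dX_metric.
move=> fint x y.
have fxint := integrable_mul_dist x fint.
have fyint := integrable_mul_dist y fint.
rewrite /distop -RintegralB //.
have gint := integrableB measurableT fxint fyint.
rewrite (le_trans (le_normr_Rintegral _ gint)) //.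
have absfint := integrable_norm fint.
rewrite mulrC -RintegralZl //; apply: le_Rintegral => //.
- exact: integrable_norm gint.
- rewrite (_ : EFin \o _ =
      (fun z => (dX x y)%:E * (EFin \o (Num.norm \o f)) z)%E).
    exact: integrableZl absfint.
  by apply: funext => z /=; rewrite EFinM.
move=> z _; rewrite -mulrBr normrM mulrC ler_wpM2r //.
by rewrite -[dX x y]mul1r; apply: dist_lipschitz.
Qed.

End MetricMeasureSpace.

Theorem lemma3p2 (R : realType) (d : measure_display) (T : measurableType d)
  (dX : T -> T -> R) (mu : {measure set T -> \bar R})
  (phi : T -> R) (lam : R) :
  compact_mm_space dX mu ->
  L2_normalized mu phi ->
  is_eigenfunction dX mu lam phi ->
  lipschitz_with dX (Num.sqrt (fine (Vol mu))) (distop dX mu phi) /\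
  (lam != 0 ->
   exists psi : T -> R,
     {ae mu, forall x, psi x = phi x} /\
     lipschitz_with dX (Num.sqrt (fine (Vol mu)) / `|lam|) psi).
Proof.
move=> [dX_metric dX_borel dX_compact dX_radon] [mphi phi_normed] eig.
have muT_fin := radon_compact_fin_num dX_metric dX_borel dX_compact dX_radon.
have muTE : mu setT = (fine (Vol mu))%:E by rewrite fineK.
have abs_phi : (\int[mu]_x `|phi x|%:E <= (Num.sqrt (fine (Vol mu)))%:E)%E.
  have := integral_abs_le_sqrte mu mphi.
  by rewrite phi_normed muTE /= sqrtr1 mule1.
have phi_int : mu.-integrable setT (EFin \o phi).
  apply/integrableP; split; first exact/measurable_EFinP.
  exact: le_lt_trans abs_phi (ltry _).
have D_lip : lipschitz_with dX (Num.sqrt (fine (Vol mu))) (distop dX mu phi).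
  have := distop_lipschitz dX_metric dX_borel dX_compact phi_int.
  apply: lipschitz_with_le => //.
  rewrite -lee_fin /Rintegral fineK // ge0_fin_numE ?integral_ge0 //.
  exact: le_lt_trans abs_phi (ltry _).
split=> // lam_neq0.
exists (fun x => distop dX mu phi x / lam); split.
  by apply: filterS eig => x ->; rewrite mulrAC divff // mul1r.
by rewrite -normfV; apply: lipschitz_withMr.
Qed.
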